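(* Let $Z$ be a real-valued random variable such that for some $\bar\delta,\bar\rho>0$ we have $\mathbb{P}(|Z|<x)\le\bar\rho x$ for all $x\le\bar\delta$. Let $q>2$ and let $(Z_\ell)_{\ell\ge 0}$ be real-valued random variables (approximations of $Z$), defined on the same probability space as $Z$, with $\mathbb{E}[|Z_\ell-Z|^q]<\infty$. For each $\ell$, let $Z_\ell^{(0)},Z_\ell^{(1)}$ be two samples of $Z_\ell$, i.e. random variables such that $(Z_\ell^{(i)},Z)$ has the same joint distribution as $(Z_\ell,Z)$ for $i=0,1$. Then for all $2\le p\le q$ there is $b_0>0$, independent of $\ell$, such that \[ \mathbb{E}\left[\left|\max\left\{\frac{Z_\ell^{(0)}+Z_\ell^{(1)}}{2},0\right\}-\frac12\sum_{i=0}^1\max\{Z_\ell^{(i)},0\}\right|^p\right]\le b_0\,\mathbb{E}\left[|Z_\ell-Z|^q\right]^{(p+1)/(q+1)}. \] *)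

From HB Require Import structures.
From mathcomp Require Import all_boot all_order all_algebra.
From mathcomp Require Import all_classical all_reals all_analysis.
Set Implicit Arguments. Unset Strict Implicit. Unset Printing Implicit Defensive.
Import Order.TTheory GRing.Theory Num.Theory.
Local Open Scope classical_set_scope.
Local Open Scope ring_scope.

Definition same_joint_law d (T : measurableType d) (R : realType)
    (P : probability T R) (X Y Z : T -> R) : Prop :=
  forall A : set (R * R)%type, measurable A ->
    P ((fun t => (X t, Z t)) @^-1` A) = P ((fun t => (Y t, Z t)) @^-1` A).

From HB Require Import structures.
From mathcomp Require Import all_boot all_order all_algebra.
From mathcomp Require Import all_classical all_reals all_analysis.
From mathcomp Require Import measurable_realfun ring lra.
Set Implicit Arguments.
Unset Strict Implicit.
Unset Printing Implicit Defensive.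
Import Order.TTheory GRing.Theory Num.Theory.
Local Open Scope classical_set_scope.
Local Open Scope ring_scope.

(* Let W be the gap between max((Z0 + Z1)/2, 0) and the mean of max(Z0, 0)
   and max(Z1, 0).  W vanishes unless Z0 and Z1 lie on opposite sides of 0,
   and then one of them, Zi, lies on the opposite side of 0 from Z, so that
   |W| <= |Zi - Z| and |Z| <= |Zi - Z|.  Splitting at a level x > 0 gives
   |W|^p <= |Zi - Z|^q x^(p-q) where |Zi - Z| >= x, and |W|^p <= x^p on
   {|Z| < x}.  As (Zi, Z) has the law of (Zl, Z) and the small-ball bound
   extends to P(|Z| < x) <= K x for all x > 0 with K = rho + 1/delta, this
   gives E|W|^p <= 2 (M x^(p-q) + K x^(p+1)) with M = E|Zl - Z|^q, and the
   choice x = M^(1/(q+1)) balances the two terms (if M = 0, let x -> 0). *)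

Section real_inequalities.
Variable R : realType.

Definition antithetic_gap (a b : R) :=
  Num.max ((a + b) / 2) 0 - (Num.max a 0 + Num.max b 0) / 2.

Lemma antithetic_gap_le_dist (a b z : R) :
  antithetic_gap a b = 0 \/
  (`|antithetic_gap a b| <= `|a - z| /\ `|z| <= `|a - z|) \/
  (`|antithetic_gap a b| <= `|b - z| /\ `|z| <= `|b - z|).
Proof.
rewrite /antithetic_gap !ler_norml.
case: (leP a 0) => ha; case: (leP b 0) => hb; case: (leP ((a + b) / 2) 0) => hab;
  (case: (lerP 0 (a - z)) => haz; [rewrite (ger0_norm haz) | rewrite (ltr0_norm haz)]);
  (case: (lerP 0 (b - z)) => hbz; [rewrite (ger0_norm hbz) | rewrite (ltr0_norm hbz)]);
  lra.
Qed.

Definition split_bound (p q x v z : R) :=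
  v `^ q * x `^ (p - q) + x `^ p * \1_[set y | `|y| < x] z.

Lemma split_bound_ge0 (p q x v z : R) : 0 <= split_bound p q x v z.
Proof. by rewrite addr_ge0 ?mulr_ge0 ?powR_ge0. Qed.

Lemma powR_le_split_bound (p q x w v z : R) : 0 < x -> 0 <= p <= q ->
  0 <= w <= v -> `|z| <= v -> w `^ p <= split_bound p q x v z.
Proof.
move=> x0 /andP[p0 pq] /andP[w0 wv] zv.
have v0 := le_trans w0 wv.
have wv_p : w `^ p <= v `^ p by apply: ge0_ler_powR.
rewrite /split_bound; have [xv|vx] := leP x v.
- have v_gt0 : 0 < v := lt_le_trans x0 xv.
  apply: le_trans wv_p (ler_wpDr _ _); first by rewrite mulr_ge0 ?powR_ge0 // indicE.
  have -> : v `^ p = v `^ (p - q) * v `^ q.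
    by rewrite -powRD ?subrK // (gt_eqF v_gt0) implybT.
  rewrite mulrC ler_wpM2l ?powR_ge0 // -opprB !powRN lef_pV2 ?posrE ?powR_gt0 //.
  by apply: ge0_ler_powR; rewrite ?nnegrE ?subr_ge0 ?(ltW x0).
- rewrite indicE mem_set /= ?mulr1; last exact: le_lt_trans zv vx.
  apply: ler_wpDl; first by rewrite mulr_ge0 ?powR_ge0.
  by apply: (le_trans wv_p); apply: ge0_ler_powR; rewrite ?nnegrE ?(ltW x0) ?(ltW vx).
Qed.

Lemma antithetic_gap_powR_le (p q x a b z : R) : 0 < x -> 0 < p <= q ->
  `|antithetic_gap a b| `^ p
    <= split_bound p q x `|a - z| z + split_bound p q x `|b - z| z.
Proof.
move=> x0 /andP[p0 pq]; have pq' : 0 <= p <= q by rewrite ltW.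
have [->|[[gap_le z_le]|[gap_le z_le]]] := antithetic_gap_le_dist a b z.
- by rewrite normr0 powR0 ?(gt_eqF p0) //; apply: addr_ge0; apply: split_bound_ge0.
- apply: ler_wpDr; first exact: split_bound_ge0.
  by apply: powR_le_split_bound => //; rewrite normr_ge0 gap_le.
- apply: ler_wpDl; first exact: split_bound_ge0.
  by apply: powR_le_split_bound => //; rewrite normr_ge0 gap_le.
Qed.

Lemma le0_of_le_powR (I : \bar R) (c s : R) : 0 < c -> 0 < s ->
  (forall x, 0 < x -> (I <= (c * x `^ s)%:E)%E) -> (I <= 0)%E.
Proof.
move=> c0 s0 hI; apply/lee_addgt0Pr => e e0; rewrite add0e.
have ec0 := divr_gt0 e0 c0.
have := hI _ (powR_gt0 s^-1 ec0).
by rewrite -powRrM mulVf ?gt_eqF // powRr1 ?(ltW ec0) // mulrC divfK ?gt_eqF.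
Qed.

Lemma le_powR_balance (I : \bar R) (c E K p q : R) :
  0 < c -> 0 <= E -> 0 < K -> 0 < p + 1 -> 0 < q + 1 ->
  (forall x, 0 < x -> (I <= (c * (E * x `^ (p - q) + K * x `^ (p + 1)))%:E)%E) ->
  (I <= (c * (1 + K) * E `^ ((p + 1) / (q + 1)))%:E)%E.
Proof.
move=> c0 E0 K0 p10 q10 hI.
have [E_eq0|E_neq0] := eqVneq E 0.
  rewrite E_eq0 powR0 ?mulf_neq0 ?invr_eq0 ?gt_eqF // mulr0.
  apply: (@le0_of_le_powR _ (c * K) (p + 1)) => [||x x0]; rewrite ?mulr_gt0 //.
  by have := hI x x0; rewrite E_eq0 mul0r add0r mulrA.
have E_gt0 : 0 < E by rewrite lt_def E_neq0.
apply: le_trans (hI _ (powR_gt0 (q + 1)^-1 E_gt0)) _.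
rewrite lee_fin -!powRrM -{1}(powRr1 E0) -powRD ?E_neq0 ?implybT //.
have -> : 1 + (q + 1)^-1 * (p - q) = (p + 1) / (q + 1) by field; rewrite gt_eqF.
by rewrite (mulrC (q + 1)^-1) -mulrA (mulrDl 1 K) mul1r.
Qed.

End real_inequalities.

Section measurability.
Context (R : realType) d (X : measurableType d).

Lemma measurable_powR_norm (f : X -> R) (s : R) :
  measurable_fun setT f -> measurable_fun setT (fun x => `|f x| `^ s).
Proof.
move=> mf; apply: (measurableT_comp (measurable_powR s)).
exact: (measurableT_comp (@normr_measurable R setT) mf).
Qed.

Lemma measurable_norm_lt (f : X -> R) (x : R) :
  measurable_fun setT f -> measurable [set t | `|f t| < x].
Proof.
move=> mf; have mnf := measurableT_comp (@normr_measurable R setT) mf.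
have := measurable_fun_ltr mnf (measurable_cst x) measurableT (Y := [set true]) I.
by rewrite setTI.
Qed.

Lemma measurable_antithetic_gap (f g : X -> R) :
  measurable_fun setT f -> measurable_fun setT g ->
  measurable_fun setT (fun t => antithetic_gap (f t) (g t)).
Proof.
move=> mf mg; have mhalf h := measurable_funM h (@measurable_cst _ _ X R setT 2^-1).
apply: measurable_funB; first by apply: measurable_maxr => //; exact/mhalf/measurable_funD.
by apply/mhalf/measurable_funD; apply: measurable_maxr.
Qed.

End measurability.

Lemma same_joint_law_integral d (T : measurableType d) (R : realType)
    (P : probability T R) (X Y Z : T -> R) (g : (R * R)%type -> R) :
  measurable_fun setT X -> measurable_fun setT Y -> measurable_fun setT Z ->
  measurable_fun setT g -> (forall y, 0 <= g y) -> same_joint_law P X Y Z ->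
  (\int[P]_t (g (X t, Z t))%:E = \int[P]_t (g (Y t, Z t))%:E)%E.
Proof.
move=> mX mY mZ mg g0 XYZ.
have mEg : measurable_fun setT (EFin \o g) by exact/measurable_EFinP.
have Eg0 : {in setT, forall y, (0 <= (EFin \o g) y)%E} by move=> y _; rewrite lee_fin.
have mXZ := measurable_fun_pair mX mZ.
have mYZ := measurable_fun_pair mY mZ.
have := ge0_integral_pushforward mXZ P measurableT mEg Eg0.
have := ge0_integral_pushforward mYZ P measurableT mEg Eg0.
rewrite !preimage_setT /= => <- <-.
by apply: eq_measure_integral => A mA _; exact: XYZ.
Qed.

Lemma small_ball_le_linear d (T : measurableType d) (R : realType)
    (P : probability T R) (Z : {RV P >-> R}) (delta rho : R) :
  0 < delta -> 0 <= rho ->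
  (forall x, 0 < x -> x <= delta -> (P [set t | (`|Z t| < x)%R] <= (rho * x)%:E)%E) ->
  forall x, 0 < x -> (P [set t | (`|Z t| < x)%R] <= ((rho + delta^-1) * x)%:E)%E.
Proof.
move=> delta0 rho0 hZ x x0; have [x_le|delta_lt] := leP x delta.
  apply: (le_trans (hZ x x0 x_le)).
  by rewrite lee_fin ler_wpM2r ?(ltW x0) // lerDl invr_ge0 (ltW delta0).
apply: (le_trans (probability_le1 P (measurable_norm_lt x (measurable_funPT Z)))).
rewrite lee_fin mulrDl; apply: ler_wpDl; first by rewrite mulr_ge0 ?(ltW x0).
by rewrite -(mulVf (lt0r_neq0 delta0)) ler_wpM2l ?invr_ge0 ?(ltW delta0) ?(ltW delta_lt).
Qed.

Section antithetic_moment_bound.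
Context d (T : measurableType d) (R : realType) (P : probability T R).
Variables (Z Zl : {RV P >-> R}) (K p q : R).
Hypotheses (p_gt0 : 0 < p) (pq : p <= q).
Hypothesis small_ball :
  forall x, 0 < x -> (P [set t | (`|Z t| < x)%R] <= (K * x)%:E)%E.
Hypothesis dist_fin : (\int[P]_t (`|Zl t - Z t| `^ q)%:E < +oo)%E.

Let E := fine (\int[P]_t (`|Zl t - Z t| `^ q)%:E).

Lemma integral_dist_powR_same_law (X : {RV P >-> R}) : same_joint_law P X Zl Z ->
  (\int[P]_t (`|X t - Z t| `^ q)%:E = E%:E)%E.
Proof.
move=> XZ; rewrite /E fineK; last first.
  by rewrite ge0_fin_numE // integral_ge0 // => t _; rewrite lee_fin powR_ge0.
have mg : measurable_fun setT (fun y : (R * R)%type => `|y.1 - y.2| `^ q).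
  exact/measurable_powR_norm/measurable_funB.
exact: (same_joint_law_integral (measurable_funPT X) (measurable_funPT Zl)
  (measurable_funPT Z) mg (fun y => powR_ge0 _ _) XZ).
Qed.

Lemma measurable_split_bound (X : {RV P >-> R}) (x : R) :
  measurable_fun setT (fun t => split_bound p q x `|X t - Z t| (Z t)).
Proof.
apply: measurable_funD; apply: measurable_funM => //.
- exact/measurable_powR_norm/measurable_funB.
- exact/measurable_indic/measurable_norm_lt.
Qed.

Lemma integral_split_bound (X : {RV P >-> R}) (x : R) : same_joint_law P X Zl Z ->
  (\int[P]_t (split_bound p q x `|X t - Z t| (Z t))%:E
   = (E * x `^ (p - q))%:E + (x `^ p)%:E * P [set t | (`|Z t| < x)%R])%E.
Proof.
move=> XZ; have mA := measurable_norm_lt x (measurable_funPT Z).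
have mD := measurable_powR_norm q (measurable_funB (measurable_funPT X) (measurable_funPT Z)).
rewrite /split_bound; under eq_integral do rewrite EFinD EFinM EFinM.
rewrite ge0_integralD //; first last.
- by apply/measurable_EFinP/measurable_funM => //; exact: measurable_indic.
- by move=> t _; rewrite lee_fin mulr_ge0 ?powR_ge0 // indicE.
- exact/measurable_EFinP/measurable_funM.
- by move=> t _; rewrite lee_fin mulr_ge0 ?powR_ge0.
rewrite ge0_integralZr //; first last.
- by rewrite lee_fin powR_ge0.
- exact/measurable_EFinP.
rewrite integral_dist_powR_same_law // -EFinM ge0_integralZl_EFin ?powR_ge0 //.
  by rewrite integral_indic ?setIT.
exact/measurable_EFinP/measurable_indic.
Qed.

Lemma integral_antithetic_gap_le (Z0 Z1 : {RV P >-> R}) (x : R) : 0 < x ->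
  same_joint_law P Z0 Zl Z -> same_joint_law P Z1 Zl Z ->
  (\int[P]_t (`|antithetic_gap (Z0 t) (Z1 t)| `^ p)%:E
   <= (2 * (E * x `^ (p - q) + K * x `^ (p + 1)))%:E)%E.
Proof.
move=> x0 Z0Z Z1Z; have pq' : 0 < p <= q by rewrite p_gt0 pq.
have S_ge0 (X : {RV P >-> R}) t : [set: T] t ->
    (0 <= (split_bound p q x `|X t - Z t| (Z t))%:E)%E.
  by rewrite lee_fin split_bound_ge0.
have mS (X : {RV P >-> R}) :
    measurable_fun setT (fun t => (split_bound p q x `|X t - Z t| (Z t))%:E).
  exact/measurable_EFinP/measurable_split_bound.
have gap_le : (\int[P]_t (`|antithetic_gap (Z0 t) (Z1 t)| `^ p)%:E
    <= \int[P]_t ((split_bound p q x `|Z0 t - Z t| (Z t))%:E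
                  + (split_bound p q x `|Z1 t - Z t| (Z t))%:E))%E.
  apply: ge0_le_integral => //.
  - exact/measurable_EFinP/measurable_powR_norm/measurable_antithetic_gap.
  - exact: emeasurable_funD.
  - by move=> t _; rewrite -EFinD lee_fin antithetic_gap_powR_le.
(* Rewriting with [ge0_integralD] in the goal would coerce [P] to a bare
   measure, on which [integral_split_bound] no longer matches. *)
have integralD_split : (\int[P]_t ((split_bound p q x `|Z0 t - Z t| (Z t))%:E
                                   + (split_bound p q x `|Z1 t - Z t| (Z t))%:E)
    = \int[P]_t (split_bound p q x `|Z0 t - Z t| (Z t))%:E
      + \int[P]_t (split_bound p q x `|Z1 t - Z t| (Z t))%:E)%E.
  by rewrite ge0_integralD //; by [apply: S_ge0 | apply: mS].
apply: (le_trans gap_le); rewrite integralD_split !integral_split_bound //.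
have tail_le :
    ((x `^ p)%:E * P [set t | (`|Z t| < x)%R] <= (K * x `^ (p + 1))%:E)%E.
  rewrite powRD ?(gt_eqF x0) ?implybT // powRr1 ?(ltW x0) // mulrCA EFinM.
  by rewrite lee_wpmul2l ?lee_fin ?powR_ge0 ?small_ball.
apply: le_trans (leeD (leeD2l _ tail_le) (leeD2l _ tail_le)) _.
by rewrite -!EFinD lee_fin; lra.
Qed.

End antithetic_moment_bound.

Theorem lemma2p1 (d : measure_display) (T : measurableType d) (R : realType)
    (P : probability T R) (Z : {RV P >-> R})
    (delta rho : R) (hdelta : 0 < delta) (hrho : 0 < rho)
    (hZ : forall x : R, 0 < x -> x <= delta ->
        (P [set t | (`|Z t| < x)%R] <= (rho * x)%:E)%E)
    (q : R) (hq : 2 < q)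
    (Zl : nat -> {RV P >-> R})
    (hfin : forall l : nat,
        (\int[P]_t ((`|Zl l t - Z t| `^ q)%R%:E) < +oo)%E)
    (Z0 Z1 : nat -> {RV P >-> R})
    (hZ0 : forall l : nat, same_joint_law P (Z0 l) (Zl l) Z)
    (hZ1 : forall l : nat, same_joint_law P (Z1 l) (Zl l) Z) :
  forall p : R, 2 <= p -> p <= q ->
  exists b0 : R, 0 < b0 /\
    forall l : nat,
      (\int[P]_t ((`| Num.max ((Z0 l t + Z1 l t) / 2) 0
                     - (Num.max (Z0 l t) 0 + Num.max (Z1 l t) 0) / 2 | `^ p)%R%:E)
       <= (b0 * (fine (\int[P]_t ((`|Zl l t - Z t| `^ q)%R%:E)))
                  `^ ((p + 1) / (q + 1)))%R%:E)%E.
Proof.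
move=> p p2 pq.
have K_gt0 : 0 < rho + delta^-1 by rewrite addr_gt0 ?invr_gt0.
exists (2 * (1 + (rho + delta^-1))); split => [|l]; first lra.
have E_ge0 : 0 <= fine (\int[P]_t (`|Zl l t - Z t| `^ q)%:E).
  by rewrite fine_ge0 // integral_ge0 // => t _; rewrite lee_fin powR_ge0.
apply: le_powR_balance => //; try lra.
move=> x x0; apply: integral_antithetic_gap_le => //; first lra.
exact: small_ball_le_linear hdelta (ltW hrho) hZ.
Qed.
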